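(* Let $X$ be a finite-dimensional real normed space and let $\{H(a_i^*,\alpha_i)\mid i\in S\}$ be a family of hyperplanes in $X$ indexed by a set $S$, where $a_i^*\in X^*\setminus\{0\}$, $\alpha_i\in\mathbb{R}$. For each (possibly empty) subset $I\subset S$ put $$D_I=\Big(\bigcap_{i\in I}\{x\mid a_i^*(x)\le\alpha_i\}\Big)\cap\Big(\bigcap_{i\in S\setminus I}\{x\mid a_i^*(x)\ge\alpha_i\}\Big).$$ Then for any subsets $I,J\subset S$ one has either $D_I=D_J$ or $\mathrm{ri}\,D_I\cap\mathrm{ri}\,D_J=\varnothing$.
   Context: $H(a^*,\alpha)=\{x\in X\mid a^*(x)=\alpha\}$. $\mathrm{ri}\,M$ denotes the relative interior of a convex set $M$ (its interior relative to its affine hull). *)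

From HB Require Import structures.
From mathcomp Require Import all_boot all_order all_algebra.
From mathcomp Require Import all_classical all_reals all_analysis.
Set Implicit Arguments. Unset Strict Implicit. Unset Printing Implicit Defensive.
Import Order.TTheory GRing.Theory Num.Theory.
Import numFieldNormedType.Exports.
Local Open Scope classical_set_scope.
Local Open Scope ring_scope.

Definition finite_dim (R : realType) (X : normedModType R) : Prop :=
  exists (n : nat) (f : 'rV[R]_n -> X),
    (forall u v, f (u + v) = f u + f v) /\
    (forall (c : R) u, f (c *: u) = c *: f u) /\
    bijective f.

Definition is_dual_elt (R : realType) (X : normedModType R) (a : X -> R) : Prop :=
  (forall x y, a (x + y) = a x + a y) /\
  (forall (c : R) x, a (c *: x) = c * a x) /\
  continuous a.

Definition aff_hull (R : realType) (X : normedModType R) (M : set X) : set X :=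
  [set x | exists (m : nat) (p : 'I_m -> X) (l : 'I_m -> R),
      (forall k, M (p k)) /\ \sum_(k < m) l k = 1 /\
      x = \sum_(k < m) l k *: p k].

Definition rel_int (R : realType) (X : normedModType R) (M : set X) : set X :=
  [set x | M x /\ exists e : R, 0 < e /\ ball x e `&` aff_hull M `<=` M].

Definition D_cell (R : realType) (X : normedModType R) (S : Type)
  (a : S -> X -> R) (alpha : S -> R) (I : set S) : set X :=
  [set x | (forall i, I i -> a i x <= alpha i) /\
           (forall i, ~ I i -> alpha i <= a i x)].

From HB Require Import structures.
From mathcomp Require Import all_boot all_order all_algebra.
From mathcomp Require Import all_classical all_reals all_analysis.
Import Order.TTheory GRing.Theory Num.Theory.
Import numFieldNormedType.Exports.
Local Open Scope classical_set_scope.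
Local Open Scope ring_scope.

(* If x lies in ri D_I, the segment from any y in D_I to x can be prolonged a
   little beyond x without leaving D_I.  If moreover x is in D_J, every
   constraint on which I and J disagree is an equality at x, so a_i - alpha_i
   vanishes at x and has the I-sign at the prolonged point; along the line it
   must then have the opposite, i.e. the J-sign, at y.  Hence D_I is contained
   in D_J, and symmetrically. *)

Section Prolongation.
Context {R : realType}.

Lemma prolong_le (t u v : R) : 0 < t -> v <= (1 + t) * v - t * u -> u <= v.
Proof. by move=> t_gt0; rewrite mulrDl mul1r -addrA lerDl subr_ge0 ler_pM2l. Qed.

Lemma prolong_ge (t u v : R) : 0 < t -> (1 + t) * v - t * u <= v -> v <= u.
Proof. by move=> t_gt0; rewrite mulrDl mul1r -addrA gerDl subr_le0 ler_pM2l. Qed.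

End Prolongation.

Section RelativeInterior.
Context {R : realType} {X : normedModType R}.

Lemma aff_hull_line (M : set X) (x y : X) (t : R) :
  M x -> M y -> aff_hull M ((1 + t) *: x + (- t) *: y).
Proof.
move=> Mx My.
exists 2%N, (fun k : 'I_2 => if val k == 0%N then x else y),
  (fun k : 'I_2 => if val k == 0%N then 1 + t else - t).
split; first by move=> k; case: ifP.
rewrite !big_ord_recl !big_ord0 /= !addr0.
by split; first rewrite -addrA subrr addr0.
Qed.

Lemma rel_int_prolong (M : set X) (x y : X) :
  rel_int M x -> M y -> exists2 t : R, 0 < t & M ((1 + t) *: x + (- t) *: y).
Proof.
move=> [Mx [e [e0 ballM]]] My.
have n_gt0 : 0 < `|y - x| + 1 by apply: ltr_wpDl.
exists (e / (`|y - x| + 1)); first by rewrite divr_gt0.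
apply: ballM; split; last exact: aff_hull_line.
rewrite -ball_normE /ball_ /=.
have -> : forall t : R, x - ((1 + t) *: x + (- t) *: y) = t *: (y - x).
  by move=> t; rewrite scalerDl scale1r scaleNr scalerBr opprD opprD opprK addrA [x + _]addrA subrr add0r addrC.
rewrite normrZ gtr0_norm ?divr_gt0 // mulrAC ltr_pdivrMr //.
by rewrite ltr_pM2l // ltrDl ltr01.
Qed.

End RelativeInterior.

Arguments rel_int_prolong {R X M x y}.

Section Cells.
Context {R : realType} {X : normedModType R} {S : Type}.
Variables (a : S -> X -> R) (alpha : S -> R).
Hypothesis a_dual : forall i, is_dual_elt (a i).

Let D := D_cell a alpha.

Lemma dual_elt_line i (x y : X) (t : R) :
  a i ((1 + t) *: x + (- t) *: y) = (1 + t) * a i x - t * a i y.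
Proof. by have [aD [aZ _]] := a_dual i; rewrite aD !aZ mulNr. Qed.

Lemma rel_int_cell_sub (I J : set S) (x : X) :
  rel_int (D I) x -> D J x -> D I `<=` D J.
Proof.
move=> xriI [xJle xJge] y [yIle yIge].
have [[xIle xIge] _] := xriI.
have [t t_gt0 [zIle zIge]] := rel_int_prolong xriI (conj yIle yIge).
split=> i Ji; have [Ii|Ii] := pselect (I i); try by [apply: yIle | apply: yIge].
- have xi : a i x = alpha i by apply/eqP; rewrite eq_le xJle // xIge.
  by move: (zIge i Ii); rewrite dual_elt_line xi; apply: prolong_le.
- have xi : a i x = alpha i by apply/eqP; rewrite eq_le xIle // xJge.
  by move: (zIle i Ii); rewrite dual_elt_line xi; apply: prolong_ge.
Qed.

End Cells.

Theorem lemma3p1 (R : realType) (X : normedModType R) (S : Type)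
  (a : S -> X -> R) (alpha : S -> R) :
  finite_dim X ->
  (forall i, is_dual_elt (a i)) ->
  (forall i, a i <> (fun _ => 0)) ->
  forall I J : set S,
    D_cell a alpha I = D_cell a alpha J \/
    rel_int (D_cell a alpha I) `&` rel_int (D_cell a alpha J) = set0.
Proof.
move=> _ a_dual _ I J.
have [[x [xI xJ]]|disjoint] :=
  pselect (exists x, (rel_int (D_cell a alpha I) `&` rel_int (D_cell a alpha J)) x).
- left; apply/seteqP; split.
  + exact: rel_int_cell_sub _ _ a_dual _ _ _ xI xJ.1.
  + exact: rel_int_cell_sub _ _ a_dual _ _ _ xJ xI.1.
- by right; apply/seteqP; split=> // x ?; apply: disjoint; exists x.
Qed.
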